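(* Let $p$ be a prime and let $P$ be any box with inputs and outputs in $\mathbb{Z}_p$. For $j\in\mathbb{Z}_p$ define $$\mu_j=\frac1{p^2}\sum_{x,y=0}^{p-1}\ \sum_{k=0}^{p-1}P(a=k,\,b=k-xy+j\mid x,y).$$ Then $P\to\sum_{j=0}^{p-1}\mu_j\,PR_{p,j}$. Explicitly, the following protocol uses one copy of $P$. Alice and Bob draw independent uniform shared $\alpha,\beta,\gamma\in\mathbb{Z}_p$. They input $x+\alpha$ and $y+\beta$ into $P$ and obtain $a',b'$. Alice outputs $a=a'-\beta x-\alpha\beta+\gamma$ and Bob outputs $b=b'+\alpha y+\gamma$. The resulting box is exactly $\sum_{j}\mu_jPR_{p,j}$.
   Context: Let $p$ be a prime. All arithmetic on elements of $\mathbb{Z}_p$ is modulo $p$. A box is a conditional probability distribution $P(a,b\mid x,y)$ with $a,b,x,y\in\mathbb{Z}_p$. It is shared by Alice, who supplies $x$ and receives $a$, and Bob, who supplies $y$ and receives $b$. Different copies act independently. For $j\in\mathbb{Z}_p$, the box $PR_{p,j}$ is defined by $PR_{p,j}(a,b\mid x,y)=1/p$ if $a-b=xy-j$, and $0$ otherwise. A convex combination of boxes is the corresponding convex combination of conditional distributions. $P_1\to P_2$ means the following. For some $N\ge1$, Alice and Bob, using shared randomness, $N$ copies of $P_1$, and local processing but no communication, can exactly produce outputs distributed as $P_2(a,b\mid x,y)$ for every input pair $(x,y)$. *)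

From HB Require Import structures.
From mathcomp Require Import all_boot all_order all_algebra.
Set Implicit Arguments. Unset Strict Implicit. Unset Printing Implicit Defensive.
Import Order.TTheory GRing.Theory Num.Theory.
Local Open Scope ring_scope.

(* A box with inputs/outputs in Z_p: P a b x y = P(a,b | x,y).
   Probabilities live in an arbitrary real field R. *)
Definition box (R : realFieldType) (p : nat) := 'F_p -> 'F_p -> 'F_p -> 'F_p -> R.

Definition is_box (R : realFieldType) (p : nat) (P : box R p) : Prop :=
  (forall a b x y, 0 <= P a b x y) /\
  (forall x y, \sum_(a : 'F_p) \sum_(b : 'F_p) P a b x y = 1).

Definition PR (R : realFieldType) (p : nat) (j : 'F_p) : box R p :=
  fun a b x y => if a - b == x * y - j then (p%:R)^-1 else 0.

Definition mu (R : realFieldType) (p : nat) (P : box R p) (j : 'F_p) : R :=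
  (p%:R ^+ 2)^-1 *
  \sum_(x : 'F_p) \sum_(y : 'F_p) \sum_(k : 'F_p) P k (k - x * y + j) x y.

Definition PR_mixture (R : realFieldType) (p : nat) (P : box R p) : box R p :=
  fun a b x y => \sum_(j : 'F_p) mu P j * PR R j a b x y.

(* P1 -> P2 : exact simulation using N >= 1 copies of P1, shared randomness
   and local (possibly adaptive) processing, no communication.
   - Shared randomness: a finite probability space (Lam, q); local randomness
     is absorbed into it (finitely many deterministic strategies exist, so a
     finite space is without loss of generality).
   - Alice uses the copies in order 0..N-1; the input she gives to copy i may
     depend on the shared randomness, her input x and her outputs from the
     copies k < i (causality); her final output depends on the shared
     randomness, x and all her outputs.  Same for Bob.
   - The copies act independently: the joint probability of output vectors
     (oa, ob) is the product over copies of P1(oa i, ob i | inputs i). *)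
Definition simulates (R : realFieldType) (p : nat) (P1 P2 : box R p) : Prop :=
  exists (N : nat) (Lam : finType) (q : Lam -> R)
         (inA : Lam -> 'F_p -> {ffun 'I_N -> 'F_p} -> 'I_N -> 'F_p)
         (outA : Lam -> 'F_p -> {ffun 'I_N -> 'F_p} -> 'F_p)
         (inB : Lam -> 'F_p -> {ffun 'I_N -> 'F_p} -> 'I_N -> 'F_p)
         (outB : Lam -> 'F_p -> {ffun 'I_N -> 'F_p} -> 'F_p),
    [/\ (1 <= N)%N,
        (forall l, 0 <= q l),
        \sum_(l : Lam) q l = 1,
        (forall l x (o o' : {ffun 'I_N -> 'F_p}) (i : 'I_N),
           (forall k : 'I_N, (k < i)%N -> o k = o' k) ->
           inA l x o i = inA l x o' i /\ inB l x o i = inB l x o' i) &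
        (forall a b x y,
           P2 a b x y =
           \sum_(l : Lam) q l *
             \sum_(oa : {ffun 'I_N -> 'F_p}) \sum_(ob : {ffun 'I_N -> 'F_p})
               ((outA l x oa == a) && (outB l y ob == b))%:R *
               \prod_(i : 'I_N) P1 (oa i) (ob i) (inA l x oa i) (inB l y ob i))].

Definition depolarize_protocol (R : realFieldType) (p : nat) (P : box R p) : box R p :=
  fun a b x y =>
    (p%:R ^+ 3)^-1 *
    \sum_(al : 'F_p) \sum_(be : 'F_p) \sum_(ga : 'F_p)
      \sum_(a' : 'F_p) \sum_(b' : 'F_p)
        ((a == a' - be * x - al * be + ga) && (b == b' + al * y + ga))%:R *
        P a' b' (x + al) (y + be).

From HB Require Import structures.
From mathcomp Require Import all_boot all_order all_algebra.
From mathcomp Require Import ring.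
From Stdlib Require Import FunctionalExtensionality.
Import Order.TTheory GRing.Theory Num.Theory.
Local Open Scope ring_scope.

(* Both boxes in the theorem are evaluated in closed form: for every input
   pair (x, y) and outputs (a, b),
      depolarize_protocol P a b x y = PR_mixture P a b x y
                                    = mu P (x y - a + b) / p.
   For the mixture this is immediate, since PR_{p,j}(a,b|x,y) is nonzero
   only for j = x y - a + b.  For the protocol, summing out the outputs of
   the copy of P leaves a single term per shared randomness (al, be, ga),
   and the change of variables u = x + al, v = y + be,
   k = a + u v - u y - ga turns the sum over (al, be, ga) into exactly the
   sum defining mu P (x y - a + b).
   Independently, every one-copy protocol driven by a finite shared random
   variable is a legitimate simulation in the sense of [simulates]; the
   depolarization protocol is such a protocol with uniform weights on
   'F_p^3, which sum to 1 because #|'F_p| = p for p prime. *)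

Lemma sum_indicator (R : realFieldType) (T : finType) (F : T -> R) (c : T) :
  \sum_(t : T) ((t == c)%:R * F t) = F c.
Proof.
rewrite (bigD1 c) //= eqxx mul1r big1 ?addr0 // => t /negbTE ->.
by rewrite mul0r.
Qed.

Lemma sum_indicator2 (R : realFieldType) (T : finType) (F : T -> T -> R)
    (c d : T) :
  \sum_(s : T) \sum_(t : T) (((s == c) && (t == d))%:R * F s t) = F c d.
Proof.
rewrite -(@sum_indicator R _ (fun s => F s d) c); apply: eq_bigr => s _.
have [-> | _] := eqVneq s c; first by rewrite mul1r sum_indicator.
by rewrite mul0r big1 // => t _; rewrite mul0r.
Qed.

(* The mixture of PR boxes only sees the weight of the unique compatible j. *)
Lemma PR_mixtureE (R : realFieldType) (p : nat) (P : box R p) a b x y :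
  PR_mixture P a b x y = mu P (x * y - a + b) * (p%:R)^-1.
Proof.
rewrite /PR_mixture -(@sum_indicator R _ (fun j => mu P j * (p%:R)^-1)).
apply: eq_bigr => j _; rewrite /PR.
have -> : (a - b == x * y - j) = (j == x * y - a + b).
  by apply/eqP/eqP => E; [rewrite -[j](subKr (x * y)) -E | rewrite E]; ring.
by case: (_ == _); rewrite ?mul1r ?mul0r ?mulr0.
Qed.

Lemma depolarize_fixed_randomness (R : realFieldType) (p : nat) (P : box R p)
    (a b x y al be ga : 'F_p) :
  \sum_(a' : 'F_p) \sum_(b' : 'F_p)
     ((a == a' - be * x - al * be + ga) && (b == b' + al * y + ga))%:R *
     P a' b' (x + al) (y + be)
  = P (a + be * x + al * be - ga) (b - al * y - ga) (x + al) (y + be).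
Proof.
rewrite -(@sum_indicator2 R _ (fun s t => P s t (x + al) (y + be))).
apply: eq_bigr => s _; apply: eq_bigr => t _.
by congr (_%:R * _); congr (_ && _); apply/eqP/eqP => ->; ring.
Qed.

Lemma subr_inj (p : nat) (c : 'F_p) : injective (fun u : 'F_p => u - c).
Proof. exact: (can_inj (addrNK c)). Qed.

Lemma rsubr_inj (p : nat) (c : 'F_p) : injective (fun u : 'F_p => c - u).
Proof. by move=> u v /= /addrI /oppr_inj. Qed.

Lemma depolarize_protocolE (R : realFieldType) (p : nat) (P : box R p) a b x y :
  depolarize_protocol P a b x y = mu P (x * y - a + b) * (p%:R)^-1.
Proof.
rewrite /depolarize_protocol /mu [RHS]mulrC [RHS]mulrA -invfM -exprS; congr (_ * _).
under eq_bigr do under eq_bigr do under eq_bigr do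
  rewrite depolarize_fixed_randomness.
rewrite (reindex_inj (@subr_inj p x)) /=.
apply: eq_bigr => u _; rewrite (reindex_inj (@subr_inj p y)) /=.
apply: eq_bigr => v _; rewrite (reindex_inj (@rsubr_inj p (a + u * v - u * y))) /=.
by apply: eq_bigr => k _; congr (P _ _ _ _); ring.
Qed.

Definition one_copy_box (R : realFieldType) (p : nat) (Lam : finType)
    (q : Lam -> R) (inA : Lam -> 'F_p -> 'F_p) (outA : Lam -> 'F_p -> 'F_p -> 'F_p)
    (inB : Lam -> 'F_p -> 'F_p) (outB : Lam -> 'F_p -> 'F_p -> 'F_p)
    (P : box R p) : box R p :=
  fun a b x y =>
    \sum_(l : Lam) q l *
      \sum_(a' : 'F_p) \sum_(b' : 'F_p)
        ((outA l x a' == a) && (outB l y b' == b))%:R * P a' b' (inA l x) (inB l y).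
Arguments one_copy_box {R p Lam}.

Lemma sum_ffun_ord1 (R : realFieldType) (T : finType) (G : {ffun 'I_1 -> T} -> R) :
  \sum_(o : {ffun 'I_1 -> T}) G o = \sum_(t : T) G [ffun=> t].
Proof.
rewrite (reindex (fun t : T => [ffun=> t])) //.
apply: onW_bij; exists (fun o : {ffun 'I_1 -> T} => o ord0).
  by move=> t; rewrite ffunE.
by move=> o; apply/ffunP => i; rewrite ffunE (ord1 i).
Qed.

(* Every one-copy protocol driven by a probability distribution on a finite
   set is a simulation with N = 1; causality is vacuous for a single copy. *)
Lemma one_copy_simulates (R : realFieldType) (p : nat) (P : box R p)
    (Lam : finType) (q : Lam -> R) (inA : Lam -> 'F_p -> 'F_p)
    (outA : Lam -> 'F_p -> 'F_p -> 'F_p) (inB : Lam -> 'F_p -> 'F_p)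
    (outB : Lam -> 'F_p -> 'F_p -> 'F_p) :
  (forall l, 0 <= q l) -> \sum_(l : Lam) q l = 1 ->
  simulates P (one_copy_box q inA outA inB outB P).
Proof.
move=> q_ge0 q_sum1.
exists 1%N, Lam, q, (fun l x _ _ => inA l x),
  (fun l x (o : {ffun 'I_1 -> 'F_p}) => outA l x (o ord0)),
  (fun l y _ _ => inB l y),
  (fun l y (o : {ffun 'I_1 -> 'F_p}) => outB l y (o ord0)).
split=> // a b x y; apply: eq_bigr => l _; congr (_ * _).
rewrite sum_ffun_ord1; apply: eq_bigr => a' _.
rewrite sum_ffun_ord1; apply: eq_bigr => b' _.
by rewrite big_ord1 !ffunE.
Qed.

Lemma uniform_triple_sum1 (R : realFieldType) (p : nat) :
  prime p -> \sum_(l : 'F_p * 'F_p * 'F_p) (p%:R ^+ 3 : R)^-1 = 1.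
Proof.
move=> p_prime; rewrite sumr_const !card_prod card_Fp //.
have -> : (p * p * p = p ^ 3)%N by rewrite !expnS expn0 muln1 mulnA.
rewrite -[_ *+ _]mulr_natr natrX mulVf // expf_neq0 //.
by rewrite pnatr_eq0 -lt0n prime_gt0.
Qed.

Lemma depolarize_one_copy (R : realFieldType) (p : nat) (P : box R p) :
  depolarize_protocol P =
  one_copy_box (fun _ : 'F_p * 'F_p * 'F_p => (p%:R ^+ 3)^-1)
    (fun l x => x + l.1.1) (fun l x a' => a' - l.1.2 * x - l.1.1 * l.1.2 + l.2)
    (fun l y => y + l.1.2) (fun l y b' => b' + l.1.1 * y + l.2) P.
Proof.
apply: functional_extensionality => a; apply: functional_extensionality => b.
do 2!apply: functional_extensionality => ?.
rewrite /depolarize_protocol /one_copy_box pair_bigA pair_bigA mulr_sumr.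
apply: eq_bigr => [[[al be] ga]] _ /=; congr (_ * _).
by apply: eq_bigr => a' _; apply: eq_bigr => b' _; rewrite [a == _]eq_sym [b == _]eq_sym.
Qed.

Theorem lemma2 (R : realFieldType) (p : nat) (P : box R p) :
  prime p -> is_box P ->
  simulates P (PR_mixture P) /\ depolarize_protocol P = PR_mixture P.
Proof.
move=> p_prime _.
have depol_mix : depolarize_protocol P = PR_mixture P.
  do 4!apply: functional_extensionality => ?.
  by rewrite depolarize_protocolE PR_mixtureE.
split=> //; rewrite -depol_mix depolarize_one_copy.
apply: one_copy_simulates; last exact: uniform_triple_sum1.
by move=> _; rewrite invr_ge0 exprn_ge0 ?ler0n.
Qed.
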